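(* Let $d\geqslant1$, $\varepsilon\geqslant0$, let $P\in C^1([0,\infty);[0,\infty))\cap C^2((0,\infty);[0,\infty))$ be convex with $\kappa:=P'(0)>0$, let $\theta>0$, and let $\tau$ be the solution of $\ddot\tau=2\kappa/\tau$, $\tau(0)=1$, $\dot\tau(0)=0$. Consider a nonnegative density $R(t,y)$ and a velocity field $U(t,y)$, $t\geqslant0$, $y\in\mathbb R^d$. Suppose that the mass $\int_{\mathbb R^d}R(t,y)\,\mathrm dy$ is bounded and that the pseudo-energy $$\mathcal E(t)=\frac1{2\tau^2}\int R|U|^2+\frac{\varepsilon^2}{2\tau^2}\int|\nabla\sqrt R|^2+\kappa\int(R|y|^2+R\ln R)+\frac{\tau^d}{\theta}\int G\!\left(\frac{\theta R}{\tau^d}\right)$$ satisfies $\mathcal E(t)\leqslant\Lambda$ for all $t\geqslant0$. Then there exists $C_0>0$ such that for all $t\geqslant0$, $$\frac1{2\tau^2}\int R|U|^2+\frac{\varepsilon^2}{2\tau^2}\int|\nabla\sqrt R|^2+\kappa\int R(1+|y|^2+|\ln R|)+\tau^d\int G\!\left(\frac{\theta R}{\tau^d}\right)\leqslant C_0.$$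
   Context: All integrals are over $\mathbb R^d$ in $y$. $G(u)=\int_0^u\int_0^v\frac{P'(\sigma)-P'(0)}{\sigma}\,\mathrm d\sigma\,\mathrm dv$. *)

From HB Require Import structures.
From mathcomp Require Import all_boot all_order all_algebra.
From mathcomp Require Import all_classical all_reals all_analysis.
Set Implicit Arguments. Unset Strict Implicit. Unset Printing Implicit Defensive.
Import Order.TTheory GRing.Theory Num.Theory.
Import numFieldNormedType.Exports.
Local Open Scope classical_set_scope.
Local Open Scope ring_scope.

Section defs.
Variable R : realType.
Local Notation mu := (@lebesgue_measure R).

(* R^n is represented by n.-tuple R (it carries the product = Borel
   sigma-algebra in MathComp-Analysis). *)

(* Integral over R^n of a nonnegative (extended-real valued) function,
   computed as an iterated Lebesgue integral (dy_1 outermost); by Tonelli it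
   is the Lebesgue integral over R^n of a nonnegative measurable function. *)
Fixpoint iint (n : nat) : (n.-tuple R -> \bar R) -> \bar R :=
  match n return (n.-tuple R -> \bar R) -> \bar R with
  | 0 => fun f => f [tuple]
  | n'.+1 => fun f =>
      (\int[mu]_r iint (fun x : n'.-tuple R => f (cons_tuple r x)))%E
  end.

Definition sint (n : nat) (f : n.-tuple R -> R) : \bar R :=
  (iint (fun y => (Num.max (f y) 0)%:E) - iint (fun y => (Num.max (- f y) 0)%:E))%E.

Definition sqnorm (n : nat) (y : n.-tuple R) : R := \sum_(i < n) (tnth y i) ^+ 2.

Definition partial (n : nat) (f : n.-tuple R -> R) (i : 'I_n) (y : n.-tuple R) : R :=
  derive1 (fun r : R => f [tuple (if j == i then r else tnth y j) | j < n]) (tnth y i).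

Definition gradsq (n : nat) (f : n.-tuple R -> R) (y : n.-tuple R) : R :=
  \sum_(i < n) (partial f i y) ^+ 2.

Definition Gfun (dP : R -> R) (u : R) : \bar R :=
  (\int[mu]_(v in `[0%R, u]) \int[mu]_(s in `[0%R, v]) ((dP s - dP 0) / s)%:E)%E.

Definition energy (d : nat) (eps kappa theta : R) (dP : R -> R) (tau : R -> R)
    (Rho : R -> d.-tuple R -> R) (U : R -> d.-tuple R -> d.-tuple R) (t : R)
    : \bar R :=
  ((1 / (2 * tau t ^+ 2))%R%:E * iint (fun y => (Rho t y * sqnorm (U t y))%R%:E)
   + (eps ^+ 2 / (2 * tau t ^+ 2))%R%:E
       * iint (fun y => (gradsq (fun z => Num.sqrt (Rho t z)) y)%R%:E)
   + kappa%:E * sint (fun y => Rho t y * sqnorm y + Rho t y * ln (Rho t y))%R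
   + (tau t ^+ d / theta)%R%:E
       * iint (fun y => Gfun dP (theta * Rho t y / tau t ^+ d)%R))%E.

End defs.

From HB Require Import structures.
From mathcomp Require Import all_boot all_order all_algebra.
From mathcomp Require Import all_classical all_reals all_analysis.
From mathcomp Require Import measurable_realfun.
From mathcomp Require Import lra ring.
Import Order.TTheory GRing.Theory Num.Theory.
Import numFieldNormedType.Exports.
Local Open Scope classical_set_scope.
Local Open Scope ring_scope.
Set Implicit Arguments. Unset Strict Implicit. Unset Printing Implicit Defensive.

(* The quantum, kinetic and G terms of the energy are nonnegative: G >= 0 because
   convexity gives P'(s) >= P'(0), and tau stays positive since tau'' = 2 kappa / tau > 0
   as long as tau > 0, with tau'(0) = 0.  Only the entropy term R|y|^2 + R ln R can be
   negative, and the pointwise inequality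
     r a + r |ln r| <= 3 (r a + r ln r)_+ + 5 e^{-a/8}      (r, a >= 0)
   bounds its negative part by the Gaussian constant 5 (8 pi)^{d/2} = int 5 e^{-|y|^2/8}.
   Hence every term of the energy is bounded by Lambda plus that constant, and the same
   inequality together with the mass bound controls int R (1 + |y|^2 + |ln R|). *)

Section iterated_integral.
Variable R : realType.
Local Notation mu := (@lebesgue_measure R).
Local Open Scope ereal_scope.

Lemma iint_ge0 n (f : n.-tuple R -> \bar R) : (forall y, 0 <= f y) -> 0 <= iint f.
Proof.
elim: n f => [|n IH] f f0 /=; first exact: f0.
by apply: integral_ge0 => r _; apply: IH.
Qed.

Lemma measurable_iint n dX (X : measurableType dX) (F : X -> n.-tuple R -> \bar R) :
  measurable_fun setT (fun p : X * n.-tuple R => F p.1 p.2) ->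
  (forall x y, 0 <= F x y) ->
  measurable_fun setT (fun x => iint (F x)).
Proof.
elim: n dX X F => [|n IH] dX X F mF F0 /=.
  have -> : (fun x => F x [tuple]) =
    (fun p : X * 0.-tuple R => F p.1 p.2) \o (fun x => (x, [tuple])) by [].
  exact: (measurableT_comp mF).
pose H := fun p : X * measurableTypeR R => iint (fun z => F p.1 (cons_tuple p.2 z)).
have mH : measurable_fun setT H.
  apply: (IH _ _ (fun p z => F p.1 (cons_tuple p.2 z))) => [|p z]; last exact: F0.
  have -> : (fun q : (X * measurableTypeR R) * n.-tuple R => F q.1.1 (cons_tuple q.1.2 q.2)) =
    (fun p : X * n.+1.-tuple R => F p.1 p.2) \o (fun q => (q.1.1, cons_tuple q.1.2 q.2)) by [].
  apply: (measurableT_comp mF); apply: measurable_fun_pair => /=.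
    exact: measurableT_comp.
  by apply: (@measurable_cons _ _ _ R (fun q : (X * measurableTypeR R) * n.-tuple R => q.1.2));
    [exact: measurableT_comp|].
apply: (@measurable_fun_fubini_tonelli_F _ _ X (measurableTypeR R) R mu H mH) => x.
by apply: iint_ge0 => y; exact: F0.
Qed.

Lemma measurable_fun_cons_section n (f : n.+1.-tuple R -> \bar R) (r : R) :
  measurable_fun setT f -> measurable_fun setT (fun z : n.-tuple R => f (cons_tuple r z)).
Proof.
by move=> mf; apply: (measurableT_comp mf); exact: (measurable_cons (f := cst r) (g := id)).
Qed.

Lemma measurable_iint_section n (f : n.+1.-tuple R -> \bar R) :
  measurable_fun setT f -> (forall y, 0 <= f y) ->
  measurable_fun setT (fun r : measurableTypeR R => iint (fun z => f (cons_tuple r z))).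
Proof.
move=> mf f0; apply: (measurable_iint (F := fun r z => f (cons_tuple r z))); last by move=> *.
apply: (measurableT_comp (f := f) (g := fun p : _ * n.-tuple R => cons_tuple p.1 p.2) mf).
exact: (@measurable_cons _ _ _ R (fun p : measurableTypeR R * n.-tuple R => p.1) n snd
  measurable_fst measurable_snd).
Qed.

Lemma ge0_iintD n (f g : n.-tuple R -> \bar R) :
  measurable_fun setT f -> measurable_fun setT g ->
  (forall y, 0 <= f y) -> (forall y, 0 <= g y) ->
  iint (fun y => f y + g y) = iint f + iint g.
Proof.
elim: n f g => [|n IH] f g mf mg f0 g0 //=.
rewrite -ge0_integralD //; last 4 first.
- by move=> r _; exact: iint_ge0.
- exact: measurable_iint_section.
- by move=> r _; exact: iint_ge0.
- exact: measurable_iint_section.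
by apply: eq_integral => r _; apply: IH => //; exact: measurable_fun_cons_section.
Qed.

Lemma ge0_iintZl n (k : R) (f : n.-tuple R -> \bar R) :
  (0 <= k)%R -> measurable_fun setT f -> (forall y, 0 <= f y) ->
  iint (fun y => k%:E * f y) = k%:E * iint f.
Proof.
elim: n f => [|n IH] f k0 mf f0 //=.
rewrite -ge0_integralZl_EFin //.
- by apply: eq_integral => r _; apply: IH => //; exact: measurable_fun_cons_section.
- by move=> r _; exact: iint_ge0.
- exact: measurable_iint_section.
Qed.

Lemma ge0_le_iint n (f g : n.-tuple R -> \bar R) :
  measurable_fun setT f -> measurable_fun setT g ->
  (forall y, 0 <= f y) -> (forall y, f y <= g y) ->
  iint f <= iint g.
Proof.
elim: n f g => [|n IH] f g mf mg f0 fg //=.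
have g0 y : 0 <= g y := le_trans (f0 y) (fg y).
apply: ge0_le_integral => //; [| exact: measurable_iint_section..|].
  by move=> r _; exact: iint_ge0.
by move=> r _; apply: IH => //; exact: measurable_fun_cons_section.
Qed.

Lemma iint_prod_density n (g : R -> R) (c : R) :
  (0 <= c)%R -> (forall x, 0 <= g x)%R -> measurable_fun setT g ->
  \int[mu]_x (g x)%:E = 1 ->
  iint (fun y : n.-tuple R => (c * \prod_(i < n) g (tnth y i))%:E) = c%:E.
Proof.
move=> + g0 mg g1; elim: n c => [|n IH] c c0 /=; first by rewrite big_ord0 mulr1.
transitivity (\int[mu]_r (c%:E * (g r)%:E)).
  apply: eq_integral => r _; rewrite -EFinM -IH ?mulr_ge0 //.
  congr iint; apply: funext => z; congr EFin.
  by rewrite big_ord_recl tnth0 mulrA; congr (_ * _)%R; apply: eq_bigr => i _; rewrite tnthS.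
rewrite ge0_integralZl_EFin ?g1 ?mule1 //; first by move=> x _; rewrite lee_fin.
exact/measurable_EFinP.
Qed.

End iterated_integral.

Section gaussian_weight.
Variable R : realType.

Lemma sqnorm_ge0 n (y : n.-tuple R) : 0 <= sqnorm y.
Proof. by apply: sumr_ge0 => i _; exact: sqr_ge0. Qed.

Lemma measurable_sqnorm n : measurable_fun setT (@sqnorm R n).
Proof.
apply: (@measurable_sum _ _ R setT _ (index_enum 'I_n) (fun i (y : n.-tuple R) => tnth y i ^+ 2)).
by move=> i; apply: measurable_funX; exact: measurable_tnth.
Qed.

Lemma iint_gauss n (c : R) : 0 <= c ->
  iint (fun y : n.-tuple R => (c * expR (- sqnorm y / 8))%:E) =
  (c / normal_peak 2 ^+ n)%:E.
Proof.
move=> c0; have peak_gt0 : 0 < normal_peak (2 : R) by exact: normal_peak_gt0.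
rewrite -(@iint_prod_density R n (normal_pdf 0 2)); last 4 first.
- by rewrite divr_ge0 // exprn_ge0 // ltW.
- by move=> x; exact: normal_pdf_ge0.
- exact: measurable_normal_pdf.
- exact: integral_normal_pdf.
congr iint; apply: funext => y; congr EFin.
have -> : \prod_(i < n) normal_pdf 0 2 (tnth y i) =
    normal_peak 2 ^+ n * expR (- sqnorm y / 8).
  rewrite /normal_pdf pnatr_eq0 /= big_split /= prodr_const card_ord; congr (_ * _).
  rewrite /normal_fun -expR_sum /sqnorm mulNr mulr_suml -sumrN; congr expR.
  apply: eq_bigr => i _; rewrite subr0 mulNr; congr (- _).
  by rewrite expr2 -mulr_natr; field.
by rewrite mulrA divfK // expf_neq0 // gt_eqF.
Qed.

End gaussian_weight.

Section entropy_bounds.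
Variable R : realType.

Lemma mul_expRN_le1 (x : R) : x * expR (- x) <= 1.
Proof.
rewrite -(expRxMexpNx_1 x) ler_wpM2r ?expR_ge0 //.
by apply: le_trans (expR_ge1Dx x); rewrite lerDr.
Qed.

Lemma entropy_abs_le (r a : R) : 0 <= r -> 0 <= a ->
  r * a + r * `|ln r| <= 3 * Num.max (r * a + r * ln r) 0 + 5 * expR (- a / 8).
Proof.
move=> r_ge0 a_ge0.
have [->|r_neq0] := eqVneq r 0.
  by rewrite !mul0r addr0 maxxx mulr0 add0r mulr_ge0 ?expR_ge0.
have e_ge0 : 0 <= expR (- a / 8) := expR_ge0 _.
have max_ge0 : 0 <= Num.max (r * a + r * ln r) 0 by rewrite le_max lexx orbT.
have le_max_ent : r * a + r * ln r <= Num.max (r * a + r * ln r) 0 by rewrite le_max lexx.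
have r_gt0 : 0 < r by rewrite lt_def r_neq0.
have [r_ge1|r_lt1] := leP 1 r; first by rewrite ger0_norm ?ln_ge0 //; lra.
have ln_lt0 : ln r < 0 by rewrite ln_lt0 // r_gt0.
rewrite ltr0_norm //.
have [b lnE] : exists b, ln r = - b by exists (- ln r); rewrite opprK.
have rE : r = expR (- b) by rewrite -lnE lnK.
rewrite lnE in ln_lt0 le_max_ent max_ge0 *.
(* Either r ln r costs at most half of r a, or r <= e^{-a/2} is so small that
   r a and r |ln r| are both O(e^{-a/8}). *)
have [b_le|b_gt] := leP b (a / 2).
  have : r * b <= r * (a / 2) by rewrite ler_wpM2l.
  lra.
have ra_le : r * a <= 3 * expR (- a / 8).
  have e_split : expR (- (a / 2)) = expR (- (3 * a / 8)) * expR (- a / 8).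
    by rewrite -expRD; congr expR; field.
  have r_le : r <= expR (- (a / 2)) by rewrite rE ler_expR; lra.
  have := mul_expRN_le1 (3 * a / 8).
  have : r * a <= expR (- (a / 2)) * a by rewrite ler_wpM2r.
  rewrite e_split; nra.
have rb_le : r * b <= 2 * expR (- a / 8).
  have e_split : expR (- b) = expR (- (b / 2)) * expR (- (b / 2)).
    by rewrite -expRD; congr expR; field.
  have : expR (- (b / 2)) <= expR (- a / 8) by rewrite ler_expR; lra.
  have := ler_wpM2l (expR_ge0 (- (b / 2))) (mul_expRN_le1 (b / 2)).
  rewrite rE e_split; lra.
lra.
Qed.

Lemma entropy_negpart_le (r a : R) : 0 <= r -> 0 <= a ->
  Num.max (- (r * a + r * ln r)) 0 <= 5 * expR (- a / 8).
Proof.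
move=> r_ge0 a_ge0; rewrite ge_max; apply/andP; split; last first.
  by rewrite mulr_ge0 ?expR_ge0.
have := entropy_abs_le r_ge0 a_ge0.
have : r * - ln r <= r * `|ln r| by rewrite ler_wpM2l // -normrN ler_norm.
have : 0 <= r * a by rewrite mulr_ge0.
have := expR_ge0 (- a / 8).
by have [ent_ge0|ent_lt0] := leP 0 (r * a + r * ln r); lra.
Qed.

End entropy_bounds.

Section convex_right_derivative.
Variables (R : realType) (P dP : R -> R).
Hypothesis P_convex : forall x y l : R, 0 <= x -> 0 <= y -> 0 <= l <= 1 ->
  P (l * x + (1 - l) * y) <= l * P x + (1 - l) * P y.

Lemma convex_slope0_le a b : 0 < a -> a <= b ->
  a^-1 * (P a - P 0) <= b^-1 * (P b - P 0).
Proof.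
move=> a_gt0 ab; have b_gt0 := lt_le_trans a_gt0 ab.
have l01 : 0 <= a / b <= 1.
  by rewrite divr_ge0 ?(ltW a_gt0) ?(ltW b_gt0) //= ler_pdivrMr // mul1r.
have := P_convex (ltW b_gt0) (lexx 0) l01.
rewrite mulr0 addr0 divfK ?gt_eqF // => Pa_le.
have : P a - P 0 <= a / b * (P b - P 0) by lra.
have inv_a_ge0 : 0 <= a^-1 by rewrite invr_ge0 ltW.
move=> /(ler_wpM2l inv_a_ge0) /le_trans; apply.
by rewrite !mulrA mulVf ?gt_eqF // mul1r.
Qed.

Lemma convex_slope0_le_slope s h : 0 < s -> 0 < h ->
  s^-1 * (P s - P 0) <= h^-1 * (P (s + h) - P s).
Proof.
move=> s_gt0 h_gt0; have sh_gt0 : 0 < s + h := addr_gt0 s_gt0 h_gt0.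
have := convex_slope0_le s_gt0 (ler_wpDr (ltW h_gt0) (lexx s)).
rewrite -subr_ge0 => slope_le.
rewrite -subr_ge0; have -> : h^-1 * (P (s + h) - P s) - s^-1 * (P s - P 0) =
    (s + h) / h * ((s + h)^-1 * (P (s + h) - P 0) - s^-1 * (P s - P 0)).
  by field; rewrite !gt_eqF.
by rewrite mulr_ge0 // divr_ge0 // ltW.
Qed.

Lemma convex_derive0_le (s : R) :
  (forall x : R, 0 < x -> is_derive x 1 P (dP x)) ->
  (fun h : R => h^-1 * (P h - P 0)) @ 0^'+ --> dP 0 ->
  0 < s -> dP 0 <= dP s.
Proof.
move=> P_derive P_derive0 s_gt0.
apply: (@le_trans _ _ (s^-1 * (P s - P 0))).
  apply: (cvgr_to_le P_derive0); near=> h.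
  apply: convex_slope0_le; first by near: h; exact: nbhs_right_gt.
  by apply: ltW; near: h; exact: nbhs_right_lt.
have quot_cvg : (fun h : R => h^-1 *: (P (h *: 1 + s) - P s)) @ 0^'+ --> dP s.
  have [P_diff <-] := P_derive s s_gt0.
  apply: cvg_trans P_diff; apply: cvg_app; apply: within_subset => x /=.
  exact: lt0r_neq0.
apply: (cvgr_to_ge quot_cvg); near=> h.
rewrite /GRing.scale /= mulr1 (addrC h s).
by apply: convex_slope0_le_slope; last by near: h; exact: nbhs_right_gt.
Unshelve. all: by end_near.
Qed.

End convex_right_derivative.

Lemma Gfun_ge0 (R : realType) (dP : R -> R) (u : R) :
  (forall s, 0 < s -> dP 0 <= dP s) -> (0 <= Gfun dP u)%E.
Proof.
move=> dP_ge; apply: integral_ge0 => v _; apply: integral_ge0 => s.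
rewrite /= in_itv /= => /andP[s_ge0 _]; rewrite lee_fin.
have [->|s_neq0] := eqVneq s 0; first by rewrite invr0 mulr0.
by rewrite divr_ge0 // subr_ge0 dP_ge // lt_def s_neq0.
Qed.

Section positivity_along_ode.
Variable R : realType.

Lemma exists_first_nonpos (f : R -> R) (t : R) :
  continuous f -> 0 < f 0 -> 0 <= t -> f t <= 0 ->
  exists z, [/\ 0 < z, f z <= 0 & forall s, 0 <= s -> s < z -> 0 < f s].
Proof.
move=> f_cont f0_gt0 t_ge0 ft_le0.
pose A := [set s : R | 0 <= s /\ f s <= 0].
have A_lb : lbound A 0 by move=> s [].
have A_inf : has_inf A by split; [exists t | exists 0].
have inf_ge0 : 0 <= inf A by apply: lb_le_inf => //; exists t.
have f_pos s : 0 <= s -> s < inf A -> 0 < f s.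
  move=> s_ge0 s_lt; rewrite ltNge; apply/negP => fs_le0.
  by move: s_lt; rewrite ltNge ge_inf //; exists 0.
have f_inf_le0 : f (inf A) <= 0.
  rewrite leNgt; apply/negP => f_inf_gt0.
  have [e /= e_gt0 f_ball] := (nbhs_ballP _ _).1 (cvgr_gt (f (inf A)) (f_cont _) 0 f_inf_gt0).
  have [s As s_lt] := inf_adherent e_gt0 A_inf.
  have inf_le : inf A <= s by apply: ge_inf => //; exists 0.
  suff : 0 < f s by case: As => _; rewrite leNgt => /negP.
  apply: f_ball; rewrite /ball /= distrC ger0_norm ?subr_ge0 //.
  by rewrite ltrBlDl.
exists (inf A); split => //.
rewrite lt_def inf_ge0 andbT; apply/eqP => inf_eq0.
by move: f_inf_le0; rewrite inf_eq0 leNgt f0_gt0.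
Qed.

Lemma gt0_of_derive2_gt0 (f : R -> R) :
  (forall t, derivable f t 1) -> (forall t, derivable (derive1 f) t 1) ->
  (forall t, 0 < f t -> 0 < derive1 (derive1 f) t) ->
  0 < f 0 -> derive1 f 0 = 0 -> forall t, 0 <= t -> 0 < f t.
Proof.
move=> df d2f f''_gt0 f0_gt0 f'0 t t_ge0; rewrite ltNge; apply/negP => ft_le0.
have is_derive_f (x : R) : is_derive x 1 f (derive1 f x).
  by rewrite derive1E; exact: derivableP.
have is_derive_f' (x : R) : is_derive x 1 (derive1 f) (derive1 (derive1 f) x).
  by rewrite derive1E; exact: derivableP.
have f_cont : continuous f.
  by move=> x; apply/differentiable_continuous; rewrite -derivable1_diffP.
have f'_cont : continuous (derive1 f).
  by move=> x; apply/differentiable_continuous; rewrite -derivable1_diffP.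
have [z [z_gt0 fz_le0 f_pos]] := exists_first_nonpos f_cont f0_gt0 t_ge0 ft_le0.
have [xi] := MVT z_gt0 (fun x _ => is_derive_f x) (continuous_subspaceT f_cont).
rewrite in_itv /= subr0 => /andP[xi_gt0 xi_lt] mvt_f.
have f'xi_lt0 : derive1 f xi < 0.
  by rewrite -(pmulr_llt0 _ z_gt0) -mvt_f; lra.
have [eta] := MVT xi_gt0 (fun x _ => is_derive_f' x) (continuous_subspaceT f'_cont).
rewrite in_itv /= f'0 !subr0 => /andP[eta_gt0 eta_lt] mvt_f'.
have : 0 < derive1 (derive1 f) eta * xi.
  by rewrite mulr_gt0 // f''_gt0 // f_pos ?ltW // (lt_trans eta_lt).
by rewrite -mvt_f'; lra.
Qed.

End positivity_along_ode.

(* The shape of the energy: three nonnegative terms plus [k] times the entropy, split as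
   positive part [x] minus negative part [N]. *)
Lemma parts_le_of_sum_le (R : realType) (x1 x2 x x4 N : \bar R) (k c L : R) :
  0 < k -> (0 <= x1)%E -> (0 <= x2)%E -> (0 <= x)%E -> (0 <= x4)%E ->
  (0 <= N <= c%:E)%E ->
  (x1 + x2 + k%:E * (x - N) + x4 <= L%:E)%E ->
  [/\ (x1 <= (L + k * c)%:E)%E, (x2 <= (L + k * c)%:E)%E, (x4 <= (L + k * c)%:E)%E
    & exists2 p, x = p%:E & k * p <= L + k * c].
Proof.
move=> k_gt0; case: N => [n| |] //=; last by move=> _ _ _ _ /andP[_]; rewrite leye_eq.
case: x => [p| |] // + + x_ge0 + /andP[]; rewrite !lee_fin => + + + n_ge0 n_le_c; last first.
  by rewrite /= gt0_muley ?lte_fin //; case: x1 x2 x4 => [r1||] [r2||] [r4||].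
case: x1 x2 x4 => [r1||] [r2||] [r4||] //=.
rewrite /= !lee_fin => r1_ge0 r2_ge0 r4_ge0 sum_le.
have := mulr_ge0 (ltW k_gt0) x_ge0; have := ler_wpM2l (ltW k_gt0) n_le_c.
by split; [lra..|exists p => //; lra].
Qed.

Section fixed_time_estimate.
Variables (R : realType) (d : nat) (eps kappa theta Lambda M : R) (dP tau : R -> R).
Variables (Rho : R -> d.-tuple R -> R) (U : R -> d.-tuple R -> d.-tuple R) (t : R).
Hypotheses (kappa_gt0 : 0 < kappa) (theta_gt0 : 0 < theta) (tau_ge0 : 0 <= tau t).
Hypothesis dP_ge : forall s, 0 < s -> dP 0 <= dP s.
Hypotheses (Rho_ge0 : forall y, 0 <= Rho t y) (mRho : measurable_fun setT (Rho t)).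
Hypothesis mass_le : (iint (fun y => (Rho t y)%:E) <= M%:E)%E.
Hypothesis energy_le : (energy eps kappa theta dP tau Rho U t <= Lambda%:E)%E.

Local Notation ent y := (Rho t y * sqnorm y + Rho t y * ln (Rho t y)).
Let c0 := 5 / normal_peak (2 : R) ^+ d.

Let measurable_ent : measurable_fun setT (fun y => ent y).
Proof.
apply: measurable_funD; apply: measurable_funM => //; first exact: measurable_sqnorm.
exact: measurableT_comp (@measurable_ln R) mRho.
Qed.

Let measurable_gauss :
  measurable_fun setT (fun y : d.-tuple R => (5 * expR (- sqnorm y / 8))%:E).
Proof.
apply/measurable_EFinP; apply: measurable_funM => //.
apply: measurableT_comp (@measurable_expR R) _.
by apply: measurable_funM => //; apply: measurable_funN; exact: measurable_sqnorm.
Qed.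

Let measurable_ent_pos : measurable_fun setT (fun y => (Num.max (ent y) 0)%:E).
Proof. by apply/measurable_EFinP; apply: measurable_maxr. Qed.

Lemma iint_ent_negpart_le : (iint (fun y => (Num.max (- ent y) 0)%:E) <= c0%:E)%E.
Proof.
rewrite -iint_gauss; last by rewrite ler0n.
apply: ge0_le_iint => // [|y|y]; rewrite ?lee_fin ?le_max ?lexx ?orbT //.
  by apply/measurable_EFinP; apply: measurable_maxr => //; exact: measurable_funN.
exact: entropy_negpart_le (Rho_ge0 y) (sqnorm_ge0 y).
Qed.

Lemma iint_weighted_mass_le :
  (iint (fun y => (Rho t y * (1 + sqnorm y + `|ln (Rho t y)|))%:E) <=
   M%:E + 3%:E * iint (fun y => (Num.max (ent y) 0)%:E) + c0%:E)%E.
Proof.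
rewrite -iint_gauss ?ler0n // -ge0_iintZl ?ler0n //; last first.
  by move=> y; rewrite lee_fin le_max lexx orbT.
apply: le_trans (leeD (leeD mass_le (lexx _)) (lexx _)).
have ent_pos_ge0 y : (0 <= (Num.max (ent y) 0)%:E)%E by rewrite lee_fin le_max lexx orbT.
have gauss_ge0 y : (0 <= (5 * expR (- sqnorm y / 8))%:E)%E by rewrite lee_fin mulr_ge0 ?expR_ge0.
have mRhoE : measurable_fun setT (fun y => (Rho t y)%:E) by exact/measurable_EFinP.
have m3ent_pos := measurable_funeM 3 measurable_ent_pos.
rewrite -!ge0_iintD //; last 3 first.
- exact: emeasurable_funD.
- by move=> y; rewrite adde_ge0 ?mule_ge0 // lee_fin.
- by move=> y; rewrite mule_ge0 // lee_fin.
apply: ge0_le_iint => //.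
- apply/measurable_EFinP; apply: measurable_funM => //.
  apply: measurable_funD; first by apply: measurable_funD => //; exact: measurable_sqnorm.
  apply: measurableT_comp; first exact: normr_measurable.
  exact: measurableT_comp (@measurable_ln R) mRho.
- by apply: emeasurable_funD => //; exact: emeasurable_funD.
- by move=> y; rewrite lee_fin mulr_ge0 // !addr_ge0 // sqnorm_ge0.
move=> y /=; rewrite lee_fin.
have := entropy_abs_le (Rho_ge0 y) (sqnorm_ge0 y).
by rewrite !mulrDr mulr1; lra.
Qed.

Lemma rescaled_energy_le :
  ((1 / (2 * tau t ^+ 2))%:E * iint (fun y => (Rho t y * sqnorm (U t y))%:E)
   + (eps ^+ 2 / (2 * tau t ^+ 2))%:E
       * iint (fun y => (gradsq (fun z => Num.sqrt (Rho t z)) y)%:E)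
   + kappa%:E * iint (fun y => (Rho t y * (1 + sqnorm y + `|ln (Rho t y)|))%:E)
   + (tau t ^+ d)%:E * iint (fun y => Gfun dP (theta * Rho t y / tau t ^+ d))
   <= ((5 + theta) * (Lambda + kappa * c0) + kappa * M + kappa * c0)%:E)%E.
Proof.
move: energy_le; rewrite /energy /sint /=.
set A1 := iint (fun y => (Rho t y * sqnorm (U t y))%:E).
set A2 := iint (fun y => (gradsq _ y)%:E).
set Pp := iint (fun y => (Num.max (ent y) 0)%:E).
set N := iint (fun y => (Num.max (- _) 0)%:E).
set IG := iint (fun y => Gfun dP _) => sum_le.
have T1_ge0 : (0 <= (1 / (2 * tau t ^+ 2))%:E * A1)%E.
  rewrite mule_ge0 ?lee_fin ?divr_ge0 ?sqr_ge0 ?mulr_ge0 ?sqr_ge0 //.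
  by apply: iint_ge0 => y; rewrite lee_fin mulr_ge0 ?sqnorm_ge0.
have T2_ge0 : (0 <= (eps ^+ 2 / (2 * tau t ^+ 2))%:E * A2)%E.
  rewrite mule_ge0 ?lee_fin ?divr_ge0 ?sqr_ge0 ?mulr_ge0 ?sqr_ge0 //.
  by apply: iint_ge0 => y; rewrite lee_fin sumr_ge0 // => i _; rewrite sqr_ge0.
have Pp_ge0 : (0 <= Pp)%E by apply: iint_ge0 => y; rewrite lee_fin le_max lexx orbT.
have T4_ge0 : (0 <= (tau t ^+ d / theta)%:E * IG)%E.
  rewrite mule_ge0 ?lee_fin ?divr_ge0 ?exprn_ge0 ?(ltW theta_gt0) //.
  by apply: iint_ge0 => y; exact: Gfun_ge0.
have N_bds : (0 <= N <= c0%:E)%E.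
  by rewrite iint_ent_negpart_le andbT; apply: iint_ge0 => y; rewrite lee_fin le_max lexx orbT.
have [A1_le A2_le IG_le [p Pp_E kp_le]] :=
  parts_le_of_sum_le kappa_gt0 T1_ge0 T2_ge0 Pp_ge0 T4_ge0 N_bds sum_le.
have kI_le : (kappa%:E * iint (fun y => (Rho t y * (1 + sqnorm y + `|ln (Rho t y)|))%:E)
    <= (kappa * (M + 3 * p + c0))%:E)%E.
  rewrite [X in (_ <= X)%E]EFinM; apply: lee_pmul; rewrite ?lee_fin ?(ltW kappa_gt0) //.
    by apply: iint_ge0 => y; rewrite lee_fin mulr_ge0 // !addr_ge0 // sqnorm_ge0.
  by have := iint_weighted_mass_le; rewrite -/Pp Pp_E.
have G_le : ((tau t ^+ d)%:E * IG <= (theta * (Lambda + kappa * c0))%:E)%E.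
  have -> : (tau t ^+ d)%:E = (theta%:E * (tau t ^+ d / theta)%:E)%E.
    by rewrite -EFinM mulrC divfK ?gt_eqF.
  by rewrite -muleA [X in (_ <= X)%E]EFinM; apply: lee_pmul; rewrite ?lee_fin ?(ltW theta_gt0).
apply: le_trans (leeD (leeD (leeD A1_le A2_le) kI_le) G_le) _.
rewrite -!EFinD lee_fin; lra.
Qed.

End fixed_time_estimate.

Theorem lemma3p3 (R : realType) (d : nat) (eps kappa theta Lambda : R)
  (P dP : R -> R) (tau : R -> R)
  (Rho : R -> d.-tuple R -> R) (U : R -> d.-tuple R -> d.-tuple R) :
  (0 < d)%N ->
  0 <= eps ->
  (* P in C^1([0,oo)) /\ C^2((0,oo)), P >= 0, convex, with P' = dP *)
  (forall x : R, 0 <= x -> 0 <= P x) ->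
  (forall x : R, 0 < x -> is_derive x 1 P (dP x)) ->
  ((fun h : R => h^-1 * (P h - P 0)) @ 0^'+ --> dP 0) ->
  {within `[0, +oo[, continuous dP} ->
  (forall x : R, 0 < x -> derivable dP x 1) ->
  (forall x : R, 0 < x -> {for x, continuous (derive1 dP)}) ->
  (forall x y l : R, 0 <= x -> 0 <= y -> 0 <= l <= 1 ->
     P (l * x + (1 - l) * y) <= l * P x + (1 - l) * P y) ->
  kappa = dP 0 -> 0 < kappa ->
  0 < theta ->
  (* tau solves tau'' = 2 kappa / tau, tau(0) = 1, tau'(0) = 0 *)
  (forall t : R, derivable tau t 1) ->
  (forall t : R, derivable (derive1 tau) t 1) ->
  (forall t : R, derive1 (derive1 tau) t = 2 * kappa / tau t) ->
  tau 0 = 1 -> derive1 tau 0 = 0 ->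
  (* nonnegative, measurable density *)
  (forall t y, 0 <= t -> 0 <= Rho t y) ->
  (forall t, 0 <= t -> measurable_fun setT (Rho t)) ->
  (* bounded mass *)
  (exists M : R, forall t, 0 <= t -> (iint (fun y => (Rho t y)%:E) <= M%:E)%E) ->
  (* bounded pseudo-energy *)
  (forall t, 0 <= t -> (energy eps kappa theta dP tau Rho U t <= Lambda%:E)%E) ->
  exists C0 : R, 0 < C0 /\
    forall t, 0 <= t ->
      ((1 / (2 * tau t ^+ 2))%R%:E * iint (fun y => (Rho t y * sqnorm (U t y))%R%:E)
       + (eps ^+ 2 / (2 * tau t ^+ 2))%R%:E
           * iint (fun y => (gradsq (fun z => Num.sqrt (Rho t z)) y)%R%:E)
       + kappa%:E * iint (fun y =>
           (Rho t y * (1 + sqnorm y + `|ln (Rho t y)|))%R%:E)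
       + (tau t ^+ d)%R%:E
           * iint (fun y => Gfun dP (theta * Rho t y / tau t ^+ d)%R)
       <= C0%:E)%E.
Proof.
(* Of the hypotheses on P only convexity and P' enter (through G >= 0); kappa = dP 0 is unused. *)
move=> _ _ _ P_derive P_derive0 _ _ _ P_convex _ kappa_gt0 theta_gt0
  tau_d1 tau_d2 tau_ode tau0 dtau0 Rho_ge0 mRho [M mass_le] energy_le.
have tau_gt0 : forall t, 0 <= t -> 0 < tau t.
  apply: gt0_of_derive2_gt0 => // [t tau_t_gt0|]; last by rewrite tau0.
  by rewrite tau_ode divr_gt0 // mulr_gt0.
have dP_ge s : 0 < s -> dP 0 <= dP s := convex_derive0_le P_convex P_derive P_derive0.
pose c0 := 5 / normal_peak (2 : R) ^+ d.
exists (Num.max 1 ((5 + theta) * (Lambda + kappa * c0) + kappa * M + kappa * c0)).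
split => [|t t_ge0]; first by rewrite lt_max ltr01.
apply: le_trans (rescaled_energy_le kappa_gt0 theta_gt0 (ltW (tau_gt0 t t_ge0)) dP_ge
  (fun y => Rho_ge0 t y t_ge0) (mRho t t_ge0) (mass_le t t_ge0) (energy_le t t_ge0)) _.
by rewrite lee_fin le_max lexx orbT.
Qed.
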